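(* Let $\mathbb{K}\in\{\mathbb{R},\mathbb{C}\}$ and let $\Gamma_1,\Gamma_2\subset\mathsf{GL}_d(\mathbb{K})$ be semigroups in ping-pong position relative to open sets $U_1,U_2\subset\mathbb{P}(\mathbb{K}^d)$, $V_1,V_2\subset\mathsf{Gr}_{d-1}(\mathbb{K}^d)$. Let $\varepsilon>0$ be such that $\mathrm{dist}(\overline{U_i},\overline{V_j}):=\inf\{\mathrm{dist}(x,\mathbb{P}(W)):x\in\overline{U_i},W\in\overline{V_j}\}\ge\varepsilon$ for $\{i,j\}=\{1,2\}$, and let $0<\theta<\varepsilon^2$ and $x_i\in U_i$, $y_i\in V_i$ be such that $B_\theta(x_i)\subset U_i$ and $B_\theta(y_i)\subset V_i$ for $i=1,2$. Let $\Delta=\langle\Gamma_1,\Gamma_2\rangle$, $M=\max\{\frac{16}{\varepsilon\theta},\frac{8\sqrt{d-1}}{\varepsilon^2}\}$, and $F=\{h\in\Delta:\frac{\sigma_1}{\sigma_2}(h)<M\}$. Let $g\in\Delta\smallsetminus F$ be written as a reduced word $g=g_1\cdots g_n$, $n\ge1$, with $g_k\in(\Gamma_1\cup\Gamma_2)\smallsetminus\{I_d\}$. Then: (i) if $i(g_1)\in\{1,2\}$ is the unique index with $g_1\in\Gamma_{i(g_1)}$, then $d_{\mathbb{P}}(\Xi_1(g),U_{i(g_1)})\le\frac{\varepsilon}{8}$; (ii) if $i(g_n)\in\{1,2\}$ is the unique index with $g_n\in\Gamma_{i(g_n)}$, then $d_{\mathsf{Gr}}(\Xi_{d-1}(g^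{-1}),V_{i(g_n)})\le\frac{\varepsilon}{8}$.
   Context: $\mathbb{P}(\mathbb{K}^d)$ carries the metric $d_{\mathbb{P}}([u],[v])=\sqrt{1-\frac{|\langle u,v\rangle|^2}{\|u\|^2\|v\|^2}}$ (standard Hermitian inner product); $B_r(\cdot)$ are open balls; $\mathrm{dist}(X,Y)$ is the minimal $d_{\mathbb{P}}$-distance between subsets of $\mathbb{P}(\mathbb{K}^d)$; $\mathsf{Gr}_{d-1}(\mathbb{K}^d)$ carries the metric $d_{\mathsf{Gr}}(u^\perp,v^\perp)=d_{\mathbb{P}}([u],[v])$; distance from a point to a set is the infimum. For $g$ with singular values $\sigma_1(g)\ge\dots\ge\sigma_d(g)$ and Cartan decomposition $g=k_g\mathrm{diag}(\sigma_1(g),\dots,\sigma_d(g))k_g'$, if $\sigma_k(g)>\sigma_{k+1}(g)$ then $\Xi_k(g):=k_g\langle e_1,\dots,e_k\rangle$ (independent of choices). A point $[v]$ and hyperplane $W$ are transverse if $v\notin W$. Ping-pong position: whenever $\{i,j\}=\{1,2\}$, $\overline{U_i}$ and $\overline{V_j}$ are transverse, and for all $\gamma\in\Gamma_i\smallsetminus\{I_d\}$, $\gamma\overline{U_j}\subset U_i$ and $\gamma^{-1}\overline{V_j}\subset V_i$. A reduced word is a product of elements of $(\Gamma_1\cup\Gamma_2)\smallsetminus\{I_d\}$ with no two consecutive factors in the same $\Gamma_k$. *)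

From HB Require Import structures.
From mathcomp Require Import all_boot all_order all_algebra.
From mathcomp Require Import all_classical all_reals.
From mathcomp Require Import complex.
Set Implicit Arguments. Unset Strict Implicit. Unset Printing Implicit Defensive.
Import Order.TTheory GRing.Theory Num.Theory.
Local Open Scope ring_scope.
Local Open Scope classical_set_scope.

(* The field K: b = true means K = R, b = false means K = C = R[i]. *)
Definition Kfld (R : realType) (b : bool) : fieldType :=
  if b then (R : fieldType) else (R[i] : fieldType).

Definition kconj (R : realType) (b : bool) : Kfld R b -> Kfld R b :=
  if b return Kfld R b -> Kfld R b then fun x => x
  else fun x : R[i] => let: Complex a c := x in Complex a (- c).

Definition kabs2 (R : realType) (b : bool) : Kfld R b -> R :=
  if b return Kfld R b -> R then fun x : R => x ^+ 2
  else fun x : R[i] => let: Complex a c := x in a ^+ 2 + c ^+ 2.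

Definition kofR (R : realType) (b : bool) : R -> Kfld R b :=
  if b return R -> Kfld R b then fun x => x else fun x : R => Complex x 0.

Section Defs.
Variables (R : realType) (b : bool) (d : nat).
Local Notation K := (Kfld R b).

Definition hdot (u v : 'cV[K]_d) : K := \sum_(i < d) u i 0 * kconj (v i 0).
Definition norm2 (u : 'cV[K]_d) : R := \sum_(i < d) kabs2 (u i 0).

Definition kadj (m : 'M[K]_d) : 'M[K]_d := map_mx (@kconj R b) m^T.

(* Points of P(K^d) are represented by nonzero vectors; the metric d_P. *)
Definition dP (u v : 'cV[K]_d) : R :=
  Num.sqrt (1 - kabs2 (hdot u v) / (norm2 u * norm2 v)).

(* A subset of P(K^d) is represented as a scale-invariant set of nonzero
   vectors. Hyperplanes W = w^perp (points of Gr_{d-1}) are represented by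
   a nonzero normal vector w, and d_Gr(u^perp, v^perp) = d_P([u],[v]), so
   subsets of Gr_{d-1} are also represented as projective sets (of normals). *)
Definition projset (U : set 'cV[K]_d) :=
  forall u, U u -> u != 0 /\ forall c : K, c != 0 -> U (c *: u).

Definition perp (w : 'cV[K]_d) : set 'cV[K]_d := [set x | hdot x w = 0].

Definition openP (U : set 'cV[K]_d) :=
  forall u, U u -> exists2 r : R, 0 < r &
    forall v, v != 0 -> dP u v < r -> U v.
Definition closP (U : set 'cV[K]_d) : set 'cV[K]_d :=
  [set x | x != 0 /\ forall r : R, 0 < r -> exists y, U y /\ dP x y < r].

Definition ball_sub (x : 'cV[K]_d) (r : R) (U : set 'cV[K]_d) :=
  forall v, v != 0 -> dP x v < r -> U v.

Definition dist_pt_hyp (x w : 'cV[K]_d) : R :=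
  inf [set dP x y | y in [set y | y != 0 /\ perp w y]].

Definition distUV (U V : set 'cV[K]_d) : R :=
  inf [set r | exists x w, U x /\ V w /\ r = dist_pt_hyp x w].

Definition dist_pt_set (x : 'cV[K]_d) (U : set 'cV[K]_d) : R :=
  inf [set dP x y | y in U].

Definition unitary (k : 'M[K]_d) := k *m kadj k = 1%:M.

(* Cartan decomposition g = k diag(s_1,...,s_d) k' with k, k' unitary and
   s_1 >= ... >= s_d >= 0 (s given as a list of length d; s_1 = nth 0 s 0). *)
Definition cartan (g k : 'M[K]_d) (s : seq R) (k' : 'M[K]_d) :=
  [/\ unitary k /\ unitary k', size s = d,
      (forall i, (i < d)%N -> 0 <= nth 0 s i),
      (forall i j, (i <= j < d)%N -> nth 0 s j <= nth 0 s i) &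
      g = k *m diag_mx (\row_(i < d) kofR b (nth 0 s i)) *m k'].

Definition span_first (k : 'M[K]_d) (m : nat) : set 'cV[K]_d :=
  [set k *m c | c in [set c : 'cV[K]_d | forall i : 'I_d, (m <= i)%N -> c i 0 = 0]].

Definition wordprod (gs : seq 'M[K]_d) : 'M[K]_d := foldr (@mulmx K d d d) 1%:M gs.

Definition GLsemigroup (G : set 'M[K]_d) :=
  (forall g, G g -> g \in unitmx) /\ (forall g h, G g -> G h -> G (g *m h)).

(* ping-pong position (indices 1,2 encoded as true,false; {i,j}={1,2} iff j = ~~ i) *)
Definition pingpong (G : bool -> set 'M[K]_d) (U V : bool -> set 'cV[K]_d) :=
  forall i : bool,
    (forall x w, closP (U i) x -> closP (V (~~ i)) w -> hdot x w != 0) /\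
    forall g, G i g -> g != 1%:M ->
      (forall x, closP (U (~~ i)) x -> U i (g *m x)) /\
      (forall w, closP (V (~~ i)) w ->
         exists2 w', V i w' & (fun x => invmx g *m x) @` perp w = perp w').

Definition reduced (G : bool -> set 'M[K]_d) (gs : seq 'M[K]_d) :=
  (forall h, h \in gs -> (G true h \/ G false h) /\ h != 1%:M) /\
  forall k, (k.+1 < size gs)%N -> forall i : bool,
    ~ (G i (nth 1%:M gs k) /\ G i (nth 1%:M gs k.+1)).

End Defs.

From HB Require Import structures.
From mathcomp Require Import all_boot all_order all_algebra.
From mathcomp Require Import all_classical all_reals.
From mathcomp Require Import complex.
From mathcomp Require Import ring lra.
Import Order.TTheory GRing.Theory Num.Theory.
Local Open Scope ring_scope.
Local Open Scope classical_set_scope.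
Set Implicit Arguments. Unset Strict Implicit.

(* Let g = k1 diag(s) k1' with s_1 / s_2 >= 16 / (eps theta). The ball
   B_theta(x_j) around the base point of the ping-pong set U_j opposite to the
   last letter of g contains a point x' whose component along the top
   right-singular direction k1'^* e_1 carries at least a fraction theta / 2 of
   its norm; then d(g x', k1 e_1) <= 2 s_2 / (s_1 theta) <= eps / 8, while
   ping-pong puts g x' in U_{i(g_1)}. As s_1 > s_2, the top eigenline of g g^*
   is k1 e_1 for every Cartan decomposition, so this line is Xi_1(g).
   Part (ii) is the same argument for g^* = k1'^* diag(s) k1^* with ping-pong
   on hyperplanes: the normal of Xi_{d-1}(g^-1) is the top eigenline k1'^* e_1
   of g^* g, and the normal of g^-1 (y'^perp) is g^* y'. *)

Lemma inf_itv01 (R : realType) (E : set R) :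
  (forall r, E r -> 0 <= r <= 1) -> 0 <= inf E <= 1.
Proof.
move=> E01; have [->|/set0P[r Er]] := eqVneq E set0; first by rewrite inf0 lexx ler01.
have lbE : has_lbound E by exists 0 => x /E01/andP[].
rewrite lb_le_inf => [/=||x /E01/andP[] //]; last by exists r.
by apply: le_trans (ge_inf lbE Er) _; case/andP: (E01 _ Er).
Qed.

Lemma ratio_lower_bound (R : realFieldType) (c e a b : R) :
  0 < c -> 0 < e -> c / e <= a / b -> 0 <= b -> 0 < b /\ c * b <= e * a.
Proof.
(* As [x / 0 = 0], the hypothesis already rules out [b = 0]. *)
move=> c0 e0 le_ab b0; have b_gt0 : 0 < b.
  rewrite lt_neqAle b0 andbT; apply: contraTneq le_ab => <-.
  by rewrite invr0 mulr0 -ltNge divr_gt0.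
by split=> //; move: le_ab; rewrite ler_pdivlMr // mulrAC ler_pdivrMr // [e * a]mulrC.
Qed.

Section Scalars.
Variables (R : realType) (b : bool).
Local Notation K := (Kfld R b).
Local Notation kc := (@kconj R b).
Local Notation ka := (@kabs2 R b).
Local Notation kr := (@kofR R b).

Lemma kconjD (x y : K) : kc (x + y) = kc x + kc y.
Proof. case: b x y => [//|] [a1 b1] [a2 b2] /=; congr Complex; ring. Qed.

Lemma kconjM (x y : K) : kc (x * y) = kc x * kc y.
Proof. case: b x y => [//|] [a1 b1] [a2 b2] /=; congr Complex; ring. Qed.

Lemma kconj0 : kc 0 = 0.
Proof. case: b => [//|] /=; congr Complex; ring. Qed.

Lemma kconjK (x : K) : kc (kc x) = x.
Proof. case: b x => [//|] [a1 b1] /=; congr Complex; ring. Qed.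

Lemma kconjR r : kc (kr r) = kr r.
Proof. case: b => [//|] /=; congr Complex; ring. Qed.

Lemma kofRD r s : kr (r + s) = kr r + kr s.
Proof. case: b => [//|] /=; congr Complex; ring. Qed.

Lemma kofRM r s : kr (r * s) = kr r * kr s.
Proof. case: b => [//|] /=; congr Complex; ring. Qed.

Lemma kofR0 : kr 0 = 0.
Proof. by case: b. Qed.

Lemma kofR1 : kr 1 = 1.
Proof. by case: b. Qed.

Lemma kofR_inj : injective kr.
Proof. by case: b => // r s []. Qed.

Lemma kconj1 : kc 1 = 1.
Proof. by rewrite -kofR1 kconjR. Qed.

Lemma kmulconj (x : K) : x * kc x = kr (ka x).
Proof. case: b x => [/= x|[a1 b1] /=]; first by rewrite expr2. congr Complex; ring. Qed.

Lemma kabs2_ge0 (x : K) : 0 <= ka x.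
Proof. case: b x => [/= x|[a1 b1] /=]; first exact: sqr_ge0. by rewrite addr_ge0 ?sqr_ge0. Qed.

Lemma kabs2_eq0 (x : K) : (ka x == 0) = (x == 0).
Proof.
case: b x => [/= x|[a1 b1] /=]; first by rewrite sqrf_eq0.
rewrite paddr_eq0 ?sqr_ge0 // !sqrf_eq0.
by apply/andP/eqP => [[/eqP-> /eqP->] | [-> ->]].
Qed.

Lemma kabs2M (x y : K) : ka (x * y) = ka x * ka y.
Proof. case: b x y => [/= x y|[a1 b1] [a2 b2] /=]; first by rewrite exprMn. ring. Qed.

Lemma kabs2_conj (x : K) : ka (kc x) = ka x.
Proof. case: b x => [//|[a1 b1] /=]; ring. Qed.

Lemma kabs2R r : ka (kr r) = r ^+ 2.
Proof. case: b => [//|] /=; ring. Qed.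

Lemma kabs20 : ka 0 = 0.
Proof. by rewrite -kofR0 kabs2R expr0n. Qed.

Lemma kconj_sum I (r : seq I) (P : pred I) (F : I -> K) :
  kc (\sum_(i <- r | P i) F i) = \sum_(i <- r | P i) kc (F i).
Proof. exact: (big_morph _ kconjD kconj0). Qed.

Lemma kofR_sum I (r : seq I) (P : pred I) (F : I -> R) :
  kr (\sum_(i <- r | P i) F i) = \sum_(i <- r | P i) kr (F i).
Proof. exact: (big_morph _ kofRD kofR0). Qed.

End Scalars.

Section Hermitian.
Variables (R : realType) (b : bool) (d : nat).
Local Notation K := (Kfld R b).
Local Notation kc := (@kconj R b).
Local Notation ka := (@kabs2 R b).
Local Notation kr := (@kofR R b).
Local Notation hdot := (@hdot R b d).
Local Notation norm2 := (@norm2 R b d).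
Local Notation dP := (@dP R b d).
Local Notation kadj := (@kadj R b d).
Implicit Types (u v w : 'cV[K]_d) (A Q : 'M[K]_d).

Lemma hdotC u v : hdot v u = kc (hdot u v).
Proof. by rewrite /hdot kconj_sum; apply: eq_bigr => i _; rewrite kconjM kconjK mulrC. Qed.

Lemma hdotZl c u v : hdot (c *: u) v = c * hdot u v.
Proof. by rewrite /hdot mulr_sumr; apply: eq_bigr => i _; rewrite mxE mulrA. Qed.

Lemma hdotZr c u v : hdot u (c *: v) = hdot u v * kc c.
Proof. by rewrite hdotC hdotZl kconjM -hdotC mulrC. Qed.

Lemma hdotDl u u' v : hdot (u + u') v = hdot u v + hdot u' v.
Proof. by rewrite /hdot -big_split; apply: eq_bigr => i _; rewrite mxE mulrDl. Qed.

Lemma hdotDr u v v' : hdot u (v + v') = hdot u v + hdot u v'.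
Proof. by rewrite hdotC hdotDl kconjD -!hdotC. Qed.

Lemma hdotNl u v : hdot (- u) v = - hdot u v.
Proof. by rewrite -scaleN1r hdotZl mulN1r. Qed.

Lemma hdot_mulmx A u v : hdot (A *m u) v = hdot u (kadj A *m v).
Proof.
rewrite /hdot; under eq_bigr do rewrite mxE mulr_suml.
rewrite exchange_big /=; apply: eq_bigr => j _.
rewrite mxE kconj_sum mulr_sumr; apply: eq_bigr => i _.
by rewrite !mxE kconjM kconjK mulrCA mulrA.
Qed.

Lemma hdot_delta (j : 'I_d) u : hdot (delta_mx j 0) u = kc (u j 0).
Proof.
rewrite /hdot (bigD1 j) //= big1 => [|i /negbTE ne]; last by rewrite !mxE ne mul0r.
by rewrite !mxE !eqxx mul1r addr0.
Qed.

Lemma hdotvv u : hdot u u = kr (norm2 u).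
Proof. by rewrite /hdot /norm2 kofR_sum; apply: eq_bigr => i _; rewrite kmulconj. Qed.

Lemma norm2_ge0 u : 0 <= norm2 u.
Proof. by rewrite sumr_ge0 // => i _; rewrite kabs2_ge0. Qed.

Lemma norm2_eq0 u : (norm2 u == 0) = (u == 0).
Proof.
apply/eqP/eqP => [/psumr_eq0P u0|->]; last first.
  by rewrite /norm2 big1 // => i _; rewrite mxE kabs20.
apply/matrixP => i j; rewrite (ord1 j) mxE; apply/eqP.
by rewrite -kabs2_eq0; apply/eqP/u0 => // k _; exact: kabs2_ge0.
Qed.

Lemma norm2_gt0 u : u != 0 -> 0 < norm2 u.
Proof. by move=> u0; rewrite lt_neqAle norm2_ge0 andbT eq_sym norm2_eq0. Qed.

Lemma hdotvv_eq0 u : (hdot u u == 0) = (u == 0).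
Proof. by rewrite hdotvv -kofR0 (inj_eq (@kofR_inj R b)) norm2_eq0. Qed.

Lemma norm2Z c u : norm2 (c *: u) = ka c * norm2 u.
Proof. by rewrite /norm2 mulr_sumr; apply: eq_bigr => i _; rewrite mxE kabs2M. Qed.

Lemma norm2_delta (j : 'I_d) : norm2 (delta_mx j 0) = 1.
Proof.
by apply: (@kofR_inj R b); rewrite -hdotvv hdot_delta !mxE !eqxx kconj1 kofR1.
Qed.

Lemma kadjK : involutive kadj.
Proof. by move=> A; apply/matrixP => i j; rewrite !mxE kconjK. Qed.

Lemma kadjM A B : kadj (A *m B) = kadj B *m kadj A.
Proof.
apply/matrixP => i j; rewrite !mxE kconj_sum; apply: eq_bigr => k _.
by rewrite !mxE kconjM mulrC.
Qed.

Lemma kadj1 : kadj 1%:M = 1%:M.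
Proof. by apply/matrixP => i j; rewrite !mxE eq_sym; case: eqP; rewrite ?kconj1 ?kconj0. Qed.

Lemma unitary_adj Q : unitary Q -> kadj Q *m Q = 1%:M.
Proof. exact: mulmx1C. Qed.

Lemma mulmx_linv_eq0 A B u : B *m A = 1%:M -> (A *m u == 0) = (u == 0).
Proof.
move=> BA; apply/eqP/eqP => [Au0|->]; last by rewrite mulmx0.
by rewrite -[u]mul1mx -BA -mulmxA Au0 mulmx0.
Qed.

Lemma kadj_unitmx A : A \in unitmx -> kadj A \in unitmx.
Proof.
move=> Au; suff : kadj (invmx A) *m kadj A = 1%:M by case/mulmx1_unit.
by rewrite -kadjM mulmxV // kadj1.
Qed.

Lemma dPC u v : dP u v = dP v u.
Proof. by rewrite /dP hdotC kabs2_conj [norm2 u * _]mulrC. Qed.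

Lemma dPZl c u v : c != 0 -> dP (c *: u) v = dP u v.
Proof.
move=> c0; rewrite /dP hdotZl kabs2M norm2Z -[ka c * norm2 u * _]mulrA -mulf_div divff ?mul1r //.
by rewrite kabs2_eq0.
Qed.

Lemma dPZr c u v : c != 0 -> dP u (c *: v) = dP u v.
Proof. by move=> c0; rewrite dPC dPZl // dPC. Qed.

Lemma dP_unitary Q u v : kadj Q *m Q = 1%:M -> dP (Q *m u) (Q *m v) = dP u v.
Proof.
move=> HQ; have Qn u' : norm2 (Q *m u') = norm2 u'.
  by apply: (@kofR_inj R b); rewrite -!hdotvv hdot_mulmx mulmxA HQ mul1mx.
by rewrite /dP !Qn hdot_mulmx mulmxA HQ mul1mx.
Qed.

Lemma dP_ge0 u v : 0 <= dP u v.
Proof. exact: sqrtr_ge0. Qed.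

Lemma dP_le1 u v : dP u v <= 1.
Proof.
rewrite /dP -[X in _ <= X]sqrtr1; apply: ler_wsqrtr; rewrite gerBl.
by rewrite divr_ge0 ?kabs2_ge0 ?mulr_ge0 ?norm2_ge0.
Qed.

Lemma dPvv u : u != 0 -> dP u u = 0.
Proof.
move=> u0; rewrite /dP hdotvv kabs2R -expr2 divff ?subrr ?sqrtr0 //.
by rewrite sqrf_eq0 norm2_eq0.
Qed.

End Hermitian.

Section RealDiagonal.
Variables (R : realType) (b : bool) (d : nat).
Local Notation K := (Kfld R b).
Local Notation kr := (@kofR R b).
Local Notation kadj := (@kadj R b d).
Local Notation ecol i := (delta_mx i 0 : 'cV[K]_d).
Implicit Types (u v : 'cV[K]_d) (Q : 'M[K]_d) (a c : 'I_d -> R).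

Definition rdiag_mx a : 'M[K]_d := diag_mx (\row_i kr (a i)).

Lemma rdiag_mxM a c : rdiag_mx a *m rdiag_mx c = rdiag_mx (fun i => a i * c i).
Proof.
by rewrite /rdiag_mx mulmx_diag; congr diag_mx; apply/matrixP => i j; rewrite !mxE kofRM.
Qed.

Lemma kadj_rdiag_mx a : kadj (rdiag_mx a) = rdiag_mx a.
Proof.
apply/matrixP => i j; rewrite !mxE eq_sym.
by case: eqP => [->|_]; rewrite ?mulr0n ?mulr1n ?kconj0 ?kconjR.
Qed.

Lemma rdiag_mx_delta a (i : 'I_d) :
  rdiag_mx a *m ecol i = kr (a i) *: ecol i.
Proof.
apply/matrixP => j l; rewrite /rdiag_mx mul_diag_mx !mxE (ord1 l).
by case: eqP => [->|_]; rewrite /= ?mulr1 ?mulr0.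
Qed.

Lemma delta_mx_neq0 (i : 'I_d) : ecol i != 0.
Proof. by apply/eqP => /matrixP/(_ i 0); rewrite !mxE !eqxx => /eqP; rewrite oner_eq0. Qed.

Lemma col_delta_supp u (i0 : 'I_d) :
  (forall i, i != i0 -> u i 0 = 0) -> u = u i0 0 *: ecol i0.
Proof.
move=> u0; apply/matrixP => i j; rewrite (ord1 j) !mxE.
by case: eqP => [->|/eqP ne]; rewrite /= ?mulr1 ?mulr0 // u0.
Qed.

Lemma kadj_cartan Q1 a Q2 :
  kadj (Q1 *m rdiag_mx a *m Q2) = kadj Q2 *m rdiag_mx a *m kadj Q1.
Proof. by rewrite !kadjM kadj_rdiag_mx mulmxA. Qed.

Lemma cartan_gram Q1 a Q2 : Q2 *m kadj Q2 = 1%:M ->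
  (Q1 *m rdiag_mx a *m Q2) *m kadj (Q1 *m rdiag_mx a *m Q2)
  = Q1 *m rdiag_mx (fun i => a i ^+ 2) *m kadj Q1.
Proof.
move=> HQ2; rewrite kadj_cartan !mulmxA -(mulmxA _ Q2) HQ2 mulmx1.
by rewrite -(mulmxA Q1 (rdiag_mx a)) rdiag_mxM.
Qed.

Lemma cartan_coef_neq0 Q1 a Q2 :
  Q1 *m rdiag_mx a *m Q2 \in unitmx -> forall i, a i != 0.
Proof.
rewrite !unitmx_mul => /andP[/andP[_]].
rewrite unitmxE det_diag unitfE => /prodf_neq0 Da _ i.
by apply: contraNneq (Da i isT) => ai0; rewrite mxE ai0 kofR0.
Qed.

Lemma invmx_cartan Q1 a Q2 : Q1 *m kadj Q1 = 1%:M -> Q2 *m kadj Q2 = 1%:M ->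
  (forall i, a i != 0) ->
  invmx (Q1 *m rdiag_mx a *m Q2) = kadj Q2 *m rdiag_mx (fun i => (a i)^-1) *m kadj Q1.
Proof.
move=> HQ1 HQ2 a0; set A := Q1 *m _ *m Q2.
have AB : A *m (kadj Q2 *m rdiag_mx (fun i => (a i)^-1) *m kadj Q1) = 1%:M.
  rewrite /A !mulmxA -(mulmxA _ Q2) HQ2 mulmx1 -(mulmxA _ (rdiag_mx a)) rdiag_mxM.
  have -> : rdiag_mx (fun i => a i * (a i)^-1) = 1%:M.
    by apply/matrixP => i j; rewrite !mxE divff // kofR1.
  by rewrite mulmx1 HQ1.
have [Au _] := mulmx1_unit AB.
by have := congr1 (mulmx (invmx A)) AB; rewrite (mulmxA (invmx A)) mulVmx // mul1mx mulmx1.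
Qed.

Lemma eigvec_rdiag_conj Q a (i : 'I_d) : kadj Q *m Q = 1%:M ->
  (Q *m rdiag_mx a *m kadj Q) *m (Q *m ecol i) = kr (a i) *: (Q *m ecol i).
Proof.
by move=> HQ; rewrite -!mulmxA (mulmxA (kadj Q)) HQ mul1mx rdiag_mx_delta scalemxAr.
Qed.

Lemma eigval_rdiag_conj Q a lam v : Q *m kadj Q = 1%:M -> v != 0 ->
  (Q *m rdiag_mx a *m kadj Q) *m v = kr lam *: v ->
  (exists m, a m = lam) /\ forall i, a i != lam -> (kadj Q *m v) i 0 = 0.
Proof.
move=> HQ v0 Hv; set u := kadj Q *m v.
have Du : rdiag_mx a *m u = kr lam *: u.
  have := congr1 (mulmx (kadj Q)) Hv.
  by rewrite !mulmxA (mulmx1C HQ) mul1mx -scalemxAr -mulmxA.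
have u_supp i : a i != lam -> u i 0 = 0.
  move=> ne; have /eqP := congr1 (fun M : 'cV[K]_d => M i 0) Du.
  rewrite /rdiag_mx mul_diag_mx !mxE -subr_eq0 -mulrBl mulf_eq0 subr_eq0.
  by case/orP => [/eqP/(@kofR_inj R b) ai|/eqP //]; rewrite ai eqxx in ne.
split=> //; apply: contrapT => no_m.
suff : u = 0 by move/eqP; rewrite (mulmx_linv_eq0 _ HQ) (negPf v0).
apply/matrixP => i j; rewrite (ord1 j) [RHS]mxE; apply: u_supp.
by apply/eqP => ai; apply: no_m; exists i.
Qed.

Lemma top_eigvec_unique Q1 Q2 a c (i1 i2 : 'I_d) :
  Q1 *m kadj Q1 = 1%:M -> Q2 *m kadj Q2 = 1%:M ->
  Q1 *m rdiag_mx a *m kadj Q1 = Q2 *m rdiag_mx c *m kadj Q2 ->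
  (forall i, i != i1 -> a i < a i1) -> (forall i, c i <= c i2) ->
  exists2 al : K, al != 0 & Q2 *m ecol i2 = al *: (Q1 *m ecol i1).
Proof.
(* [c i2] is an eigenvalue of the common matrix, hence some [a m <= a i1], and
   symmetrically; so [c i2 = a i1], whose eigenspace is the line of [Q1 e_i1]. *)
move=> HQ1 HQ2 E a_max c_max.
have v0 Q (i : 'I_d) : Q *m kadj Q = 1%:M -> Q *m ecol i != 0.
  by move=> HQ; rewrite (mulmx_linv_eq0 _ (mulmx1C HQ)) delta_mx_neq0.
have [[m am] supp] := eigval_rdiag_conj HQ1 (v0 _ i2 HQ2)
  (etrans (congr1 (mulmx^~ _) E) (eigvec_rdiag_conj _ i2 (mulmx1C HQ2))).
have [[p cp] _] := eigval_rdiag_conj HQ2 (v0 _ i1 HQ1)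
  (etrans (congr1 (mulmx^~ _) (esym E)) (eigvec_rdiag_conj _ i1 (mulmx1C HQ1))).
have am_le : a m <= a i1 by have [->|/a_max/ltW] := eqVneq m i1.
have c_eq : c i2 = a i1 by apply/eqP; rewrite eq_le -{1}am am_le -cp c_max.
set u := kadj Q1 *m (Q2 *m ecol i2) in supp *.
have uE : u = u i1 0 *: ecol i1.
  by apply: col_delta_supp => i /a_max; rewrite -c_eq => /lt_eqF/negbT/supp.
have vE : Q2 *m ecol i2 = Q1 *m u by rewrite /u mulmxA HQ1 mul1mx.
exists (u i1 0); last by rewrite vE {1}uE scalemxAr.
by apply: contraNneq (v0 _ i2 HQ2) => u0; rewrite vE uE u0 scale0r mulmx0.
Qed.

End RealDiagonal.

Arguments rdiag_mx {R b d} a.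

Section Hyperplanes.
Variables (R : realType) (b : bool) (d : nat).
Local Notation K := (Kfld R b).
Local Notation hdot := (@hdot R b d).
Local Notation norm2 := (@norm2 R b d).
Local Notation dP := (@dP R b d).
Local Notation kadj := (@kadj R b d).
Local Notation perp := (@perp R b d).
Implicit Types (u v w : 'cV[K]_d) (A Q : 'M[K]_d).

Lemma perp_eq_scale u v : u != 0 -> v != 0 -> perp u = perp v ->
  exists2 al : K, al != 0 & v = al *: u.
Proof.
(* [v - (<v, u> / |u|^2) u] lies in [perp u = perp v], so it is orthogonal to itself. *)
move=> u0 v0 uv.
have nu0 : kofR b (norm2 u) != 0.
  by rewrite -kofR0 (inj_eq (@kofR_inj R b)) norm2_eq0.
set al := hdot v u / kofR b (norm2 u); set r := v - al *: u.
have ru : hdot r u = 0 by rewrite hdotDl hdotNl hdotZl hdotvv divfK // subrr.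
have rv : hdot r v = 0 by have : perp u r by []; rewrite uv.
have : r == 0.
  by rewrite -hdotvv_eq0 {2}/r hdotDr -scaleNr hdotZr ru rv mul0r addr0.
rewrite subr_eq0 => /eqP vE.
by exists al => //; apply: contraNneq v0 => al0; rewrite vE al0 scale0r.
Qed.

Lemma perp_kadj_mulmx A u : perp (kadj A *m u) = [set x | perp u (A *m x)].
Proof. by apply/seteqP; split => x; rewrite /perp /= hdot_mulmx. Qed.

Lemma perp_image_invmx A w : A \in unitmx ->
  (fun x => invmx A *m x) @` perp w = perp (kadj A *m w).
Proof.
move=> Au; rewrite perp_kadj_mulmx; apply/seteqP; split => x /=.
  by case=> z zw <-; rewrite mulmxA mulmxV // mul1mx.
by move=> Ax; exists (A *m x) => //; rewrite mulmxA mulVmx // mul1mx.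
Qed.

Lemma dist_pt_set_le x (S : set 'cV[K]_d) y : S y -> dist_pt_set x S <= dP x y.
Proof.
move=> Sy; apply: ge_inf; last by exists y.
by exists 0 => r [z _ <-]; exact: dP_ge0.
Qed.

Lemma distUV_le1 (S T : set 'cV[K]_d) : distUV S T <= 1.
Proof.
suff /andP[_ //] : 0 <= distUV S T <= 1.
apply: inf_itv01 => _ [x [w [_ [_ ->]]]].
by apply: inf_itv01 => _ [y _ <-]; rewrite dP_ge0 dP_le1.
Qed.

End Hyperplanes.

Section LastNormal.
Variables (R : realType) (b : bool) (n : nat).
Local Notation K := (Kfld R b).
Local Notation kadj := (@kadj R b n.+1).
Local Notation ecol i := (delta_mx i 0 : 'cV[K]_n.+1).

Lemma span_first_normal (k : 'M[K]_n.+1) w : unitary k -> perp w = span_first k n ->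
  w = (kadj k *m w) ord_max 0 *: (k *m ecol ord_max).
Proof.
move=> uk wk; set u := kadj k *m w.
have u_supp j : j != ord_max -> u j 0 = 0.
  move=> jn; have j_lt : (j < n)%N.
    rewrite ltn_neqAle -ltnS ltn_ord andbT.
    by apply: contra jn => /eqP ej; apply/eqP; exact: val_inj.
  have : perp w (k *m ecol j).
    rewrite wk; exists (ecol j) => // i ni; rewrite !mxE.
    by case: eqP => // ij; move: ni; rewrite ij leqNgt j_lt.
  rewrite /perp /= hdot_mulmx hdot_delta => /(congr1 (@kconj R b)).
  by rewrite kconjK kconj0.
by rewrite scalemxAr -(col_delta_supp u_supp) /u mulmxA uk mul1mx.
Qed.

End LastNormal.

Lemma exists_aligned_scalar (R : realType) (b : bool) (z : Kfld R b) (B : R) : 0 <= B ->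
  exists2 be : Kfld R b, kabs2 be = B & exists2 r, 0 <= r & z * kconj be = kofR b r.
Proof.
move=> B0; have [->|z0] := eqVneq z 0.
  exists (kofR b (Num.sqrt B)); first by rewrite kabs2R sqr_sqrtr.
  by exists 0; rewrite ?mul0r ?kofR0.
have z2 : 0 < kabs2 z by rewrite lt_neqAle eq_sym kabs2_eq0 z0 kabs2_ge0.
exists (z * kofR b (Num.sqrt (B / kabs2 z))).
  rewrite kabs2M kabs2R sqr_sqrtr; last by rewrite divr_ge0 // ltW.
  by rewrite mulrCA divff ?mulr1 // gt_eqF.
exists (kabs2 z * Num.sqrt (B / kabs2 z)); first by rewrite mulr_ge0 ?sqrtr_ge0 ?ltW.
by rewrite kconjM kconjR mulrA kmulconj kofRM.
Qed.

Section NearPoints.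
Variables (R : realType) (b : bool) (d : nat).
Local Notation K := (Kfld R b).
Local Notation ka := (@kabs2 R b).
Local Notation kr := (@kofR R b).
Local Notation hdot := (@hdot R b d).
Local Notation norm2 := (@norm2 R b d).
Local Notation dP := (@dP R b d).
Local Notation kadj := (@kadj R b d).
Local Notation ecol i := (delta_mx i 0 : 'cV[K]_d).
Implicit Types (u v w : 'cV[K]_d) (A Q : 'M[K]_d).

Lemma norm2_split u (i0 : 'I_d) :
  norm2 u = ka (u i0 0) + \sum_(i | i != i0) ka (u i 0).
Proof. exact: bigD1. Qed.

(* Replace the [i0] coordinate of [a] by a scalar of squared modulus
   [q A / (1 - q)], [A] the mass of the other coordinates, in phase with
   [a i0 0]: the new vector has exactly the fraction [q] of its mass there,
   and stays within [th] of [a] whenever [a] had less than [q = th^2/4]. *)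
Lemma large_coord_near (i0 : 'I_d) a th : a != 0 -> 0 < th < 1 ->
  exists bb, [/\ bb != 0, dP a bb < th & th ^+ 2 / 4 * norm2 bb <= ka (bb i0 0)].
Proof.
move=> a0 /andP[th0 th1]; set q := th ^+ 2 / 4.
have N0 : 0 < norm2 a := norm2_gt0 a0.
have [large|small] := leP (q * norm2 a) (ka (a i0 0)).
  by exists a; rewrite dPvv.
set N := norm2 a in N0 small *; set p := ka (a i0 0) in small *.
set A := N - p; set B := q * A / (1 - q).
have q0 : 0 < q by rewrite divr_gt0 // exprn_gt0.
have q1 : q < 1 / 4 by rewrite /q; nra.
have p0 : 0 <= p := kabs2_ge0 _.
have A_gt : N * (1 - q) < A by rewrite /A; lra.
have BA : (B + A) * (1 - q) = A.
  by rewrite mulrDl /B divfK; [ring | rewrite subr_eq0 gt_eqF //; lra].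
have A0 : 0 < A by nra.
have B0 : 0 <= B by rewrite /B divr_ge0 ?mulr_ge0 ?ltW //; lra.
have [be be2 [r r0 ar]] := exists_aligned_scalar (a i0 0) B0.
set bb := a + (be - a i0 0) *: ecol i0.
have bb_i i : i != i0 -> bb i 0 = a i 0.
  by move=> /negbTE ne; rewrite !mxE ne mulr0 addr0.
have bb_i0 : bb i0 0 = be by rewrite !mxE !eqxx mulr1 addrC subrK.
have A_rest : \sum_(i | i != i0) ka (a i 0) = A by rewrite /A /N (norm2_split _ i0) addrC addKr.
have Nbb : norm2 bb = B + A.
  rewrite (norm2_split _ i0) bb_i0 be2 -A_rest; congr (_ + _).
  by apply: eq_bigr => i /bb_i ->.
have abb : hdot a bb = kr (r + A).
  rewrite /hdot (bigD1 i0) //= bb_i0 ar kofRD -A_rest kofR_sum; congr (_ + _).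
  by apply: eq_bigr => i /bb_i ->; rewrite kmulconj.
have bb0 : bb != 0 by rewrite -norm2_eq0 Nbb gt_eqF //; lra.
exists bb; split => //; last by rewrite bb_i0 be2 Nbb -/q; nra.
rewrite /dP abb kabs2R Nbb -/N -(gtr0_norm th0) -sqrtr_sqr ltr_sqrt ?exprn_gt0 //.
have -> : th ^+ 2 = 4 * q by rewrite /q; field.
rewrite ltrBlDr -ltrBlDl ltr_pdivlMr; last by rewrite mulr_gt0 //; lra.
have BA0 : 0 < B + A by lra.
have AA : A ^+ 2 = A * ((B + A) * (1 - q)) by rewrite BA expr2.
have BAq : 0 < (B + A) * (1 - q) by rewrite BA.
have : N * (1 - q) * ((B + A) * (1 - q)) < A ^+ 2 by rewrite AA ltr_pM2r.
have : 0 < N * (B + A) by rewrite mulr_gt0.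
nra.
Qed.

Lemma dP_delta_sqr y (i : 'I_d) : y != 0 ->
  dP y (ecol i) ^+ 2 = (\sum_(j | j != i) ka (y j 0)) / norm2 y.
Proof.
move=> y0; have Ny : 0 < norm2 y := norm2_gt0 y0.
rewrite /dP hdotC hdot_delta kconjK norm2_delta mulr1.
have -> : 1 - ka (y i 0) / norm2 y = (\sum_(j | j != i) ka (y j 0)) / norm2 y.
  rewrite -{1}(divff (lt0r_neq0 Ny)) -mulrBl; congr (_ / _).
  by rewrite (norm2_split y i) addrC addKr.
by rewrite sqr_sqrtr // divr_ge0 ?sumr_ge0 ?ltW // => j _; exact: kabs2_ge0.
Qed.

Lemma dP_rdiag_delta (s : 'I_d -> R) (i0 : 'I_d) c q v :
  0 < s i0 -> 0 < q -> (forall i, i != i0 -> s i ^+ 2 <= c ^+ 2) -> v != 0 ->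
  q * norm2 v <= ka (v i0 0) ->
  dP (rdiag_mx s *m v) (ecol i0) ^+ 2 * (s i0 ^+ 2 * q) <= c ^+ 2.
Proof.
move=> s0 q0 s_le v0 v_i0.
have sv i : (rdiag_mx s *m v) i 0 = kr (s i) * v i 0.
  by rewrite /rdiag_mx mul_diag_mx !mxE.
set p := ka (v i0 0); set Tv := \sum_(i | i != i0) ka (v i 0).
set T := \sum_(i | i != i0) (s i ^+ 2 * ka (v i 0)).
have Nv : norm2 v = p + Tv := norm2_split v i0.
have Tv0 : 0 <= Tv by apply: sumr_ge0 => i _; exact: kabs2_ge0.
have T0 : 0 <= T by apply: sumr_ge0 => i _; rewrite mulr_ge0 ?sqr_ge0 ?kabs2_ge0.
have T_le : T <= c ^+ 2 * Tv.
  by rewrite mulr_sumr; apply: ler_sum => i /s_le si; rewrite ler_wpM2r ?kabs2_ge0.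
have p_gt0 : 0 < p by apply: lt_le_trans v_i0; rewrite mulr_gt0 ?norm2_gt0.
have S0 : 0 < s i0 ^+ 2 * p by rewrite mulr_gt0 ?exprn_gt0.
have NDv : norm2 (rdiag_mx s *m v) = s i0 ^+ 2 * p + T.
  rewrite (norm2_split _ i0) sv kabs2M kabs2R; congr (_ + _).
  by apply: eq_bigr => i _; rewrite sv kabs2M kabs2R.
have Dv0 : rdiag_mx s *m v != 0 by rewrite -norm2_eq0 NDv gt_eqF //; lra.
rewrite dP_delta_sqr // NDv.
have -> : \sum_(j | j != i0) ka ((rdiag_mx s *m v) j 0) = T.
  by apply: eq_bigr => i _; rewrite sv kabs2M kabs2R.
rewrite mulrAC ler_pdivrMr; last lra.
have qTv : q * Tv <= p.
  by move: v_i0; rewrite Nv -/p mulrDr; have := mulr_ge0 (ltW q0) (ltW p_gt0); lra.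
have s0q : 0 <= s i0 ^+ 2 * q by rewrite mulr_ge0 ?sqr_ge0 ?ltW.
have c2s0 : 0 <= c ^+ 2 * s i0 ^+ 2 by rewrite mulr_ge0 ?sqr_ge0.
have := ler_wpM2r s0q T_le; have := ler_wpM2l c2s0 qTv.
have := mulr_ge0 (sqr_ge0 c) T0; lra.
Qed.

Lemma near_point_to_top (O I : 'M[K]_d) (s : 'I_d -> R) (i0 : 'I_d) c th x0 :
  kadj O *m O = 1%:M -> I *m kadj I = 1%:M -> 0 < s i0 -> 0 <= c ->
  (forall i, i != i0 -> s i ^+ 2 <= c ^+ 2) -> x0 != 0 -> 0 < th < 1 ->
  exists x', [/\ x' != 0, dP x0 x' < th &
    dP (O *m rdiag_mx s *m I *m x') (O *m ecol i0) * (s i0 * th) <= 2 * c].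
Proof.
move=> HO HI s0 c0 s_le x00 th01; have /andP[th0 _] := th01.
have HIl : kadj I *m I = 1%:M := mulmx1C HI.
have Ix0 : I *m x0 != 0 by rewrite (mulmx_linv_eq0 _ HIl).
have [bb [bb0 near large]] := large_coord_near i0 Ix0 th01.
have IbE : I *m (kadj I *m bb) = bb by rewrite mulmxA HI mul1mx.
exists (kadj I *m bb); split.
- by rewrite (mulmx_linv_eq0 _ HI).
- by rewrite -(dP_unitary _ _ HIl) IbE.
rewrite -mulmxA IbE -mulmxA dP_unitary //.
have q0 : 0 < th ^+ 2 / 4 by rewrite divr_gt0 ?exprn_gt0.
have := dP_rdiag_delta s0 q0 s_le bb0 large.
set D := dP _ _ => H; have D0 : 0 <= D := dP_ge0 _ _.
suff : (D * (s i0 * th)) ^+ 2 <= (2 * c) ^+ 2.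
  by rewrite ler_sqr // nnegrE ?mulr_ge0 // ltW.
by rewrite !exprMn; lra.
Qed.

End NearPoints.

Section PingPong.
Variables (R : realType) (b : bool) (d : nat).
Local Notation K := (Kfld R b).
Local Notation kadj := (@kadj R b d).
Local Notation perp := (@perp R b d).
Variables (G : bool -> set 'M[K]_d) (U V : bool -> set 'cV[K]_d).
Hypothesis HG : forall i, GLsemigroup (G i).
Hypothesis HU : forall i, projset (U i).
Hypothesis HV : forall i, projset (V i).
Hypothesis PP : pingpong G U V.

Lemma wordprod_cons (h : 'M[K]_d) t : wordprod (h :: t) = h *m wordprod t.
Proof. by []. Qed.

Lemma closP_sub (W : set 'cV[K]_d) x : projset W -> W x -> closP W x.
Proof.
move=> pW Wx; have x0 := (pW x Wx).1.
by split=> // r r0; exists x; rewrite dPvv.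
Qed.

Lemma reduced_behead h t : reduced G (h :: t) -> reduced G t.
Proof.
case=> letters alt; split=> [h' h't|k kt]; first by apply: letters; rewrite inE h't orbT.
exact: (alt k.+1).
Qed.

Lemma reduced_letter gs h : reduced G gs -> h \in gs -> (exists i, G i h) /\ h != 1%:M.
Proof.
by case=> letters _ /letters[[Gh|Gh] h1]; split=> //; [exists true | exists false].
Qed.

Lemma reduced_next h h' t i i' : reduced G [:: h, h' & t] -> G i h -> G i' h' -> i' = ~~ i.
Proof.
case=> _ alt Gh Gh'; have [ii|] := eqVneq i' i; last by case: i i' {Gh Gh'} => [] [].
by exfalso; apply: (alt 0%N _ i); split=> //=; rewrite -ii.
Qed.

Lemma wordprod_unitmx gs : reduced G gs -> wordprod gs \in unitmx.
Proof.
elim: gs => [|h t IH] red /=; first exact: unitmx1.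
have [[i Gh] _] := reduced_letter red (mem_head _ _).
by rewrite unitmx_mul (HG i).1 // (IH (reduced_behead red)).
Qed.

Lemma pingpong_U h t j x : reduced G (h :: t) -> G j (last h t) ->
  closP (U (~~ j)) x -> exists i, G i h /\ U i (wordprod (h :: t) *m x).
Proof.
elim: t h j x => [|h' t IH] h j x red Gj Ux.
  have [_ h1] := reduced_letter red (mem_head _ _).
  by exists j; split=> //=; rewrite mulmx1; apply: ((PP j).2 h Gj h1).1.
have [i' [Gi' Ui']] := IH h' j x (reduced_behead red) Gj Ux.
have [[i Gi] h1] := reduced_letter red (mem_head _ _).
exists i; split=> //; rewrite wordprod_cons -mulmxA; apply: ((PP i).2 h Gi h1).1.
by rewrite -(reduced_next red Gi Gi'); exact: closP_sub (@HU i') Ui'.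
Qed.

Lemma pingpong_step_V g j w : G j g -> g != 1%:M -> closP (V (~~ j)) w ->
  exists2 w', V j w' & perp w' = perp (kadj g *m w).
Proof.
move=> Gg g1 Vw; have [w' Vw' w'E] := ((PP j).2 g Gg g1).2 w Vw.
by exists w'; rewrite // -w'E perp_image_invmx // (HG j).1.
Qed.

Lemma pingpong_V h t j w : reduced G (h :: t) -> G j h -> closP (V (~~ j)) w ->
  exists i, G i (last h t) /\
    exists2 w', V i w' & perp w' = perp (kadj (wordprod (h :: t)) *m w).
Proof.
elim: t h j w => [|h' t IH] h j w red Gj Vw;
  have [_ h1] := reduced_letter red (mem_head _ _);
  have [w1 Vw1 w1E] := pingpong_step_V Gj h1 Vw.
  by exists j; split=> //; exists w1; rewrite //= mulmx1.
have [[i' Gi'] _] : (exists i, G i h') /\ h' != 1%:M.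
  by apply: reduced_letter red _; rewrite !inE eqxx orbT.
have ij := reduced_next red Gj Gi'; subst i'.
have Vw1' : closP (V (~~ ~~ j)) w1 by rewrite negbK; exact: closP_sub (@HV j) Vw1.
have [i [Gi [w' Vw' w'E]]] := IH h' (~~ j) w1 (reduced_behead red) Gi' Vw1'.
exists i; split=> //; exists w' => //.
by rewrite wordprod_cons kadjM -mulmxA w'E !perp_kadj_mulmx w1E perp_kadj_mulmx.
Qed.

End PingPong.

Section TopDirections.
Variables (R : realType) (b : bool) (n : nat).
Local Notation d := n.+2.
Local Notation K := (Kfld R b).
Local Notation kadj := (@kadj R b d).
Local Notation ecol i := (delta_mx i 0 : 'cV[K]_d).
Variables (G : bool -> set 'M[K]_d) (U V : bool -> set 'cV[K]_d).
Hypothesis HG : forall i, GLsemigroup (G i).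
Hypothesis HU : forall i, projset (U i).
Hypothesis HV : forall i, projset (V i).
Hypothesis PP : pingpong G U V.
Variables (eps theta : R) (x y : bool -> 'cV[K]_d).
Hypothesis eps01 : 0 < eps <= 1.
Hypothesis theta01 : 0 < theta < 1.
Hypothesis Hxy : forall i, U i (x i) /\ V i (y i) /\
  ball_sub (x i) theta (U i) /\ ball_sub (y i) theta (V i).
Variables (h : 'M[K]_d) (t : seq 'M[K]_d).
Hypothesis red : reduced G (h :: t).
Local Notation g := (wordprod (h :: t)).
Variables (k1 k1' : 'M[K]_d) (s1 : seq R).
Hypothesis g_cartan : cartan g k1 s1 k1'.
Hypothesis s1_gt0 : 0 < nth 0 s1 1.
Hypothesis gap : 16 * nth 0 s1 1 <= eps * theta * nth 0 s1 0.
Local Notation s1f := (fun i : 'I_d => nth 0 s1 i).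

Lemma s1_ge0 (i : 'I_d) : 0 <= s1f i.
Proof. by case: g_cartan => _ _ s_ge0 _ _; exact: s_ge0. Qed.

Lemma s1_le_snd (i : 'I_d) : i != ord0 -> s1f i <= nth 0 s1 1.
Proof. by case: g_cartan => _ _ _ s_sorted _ i0; apply: s_sorted; rewrite lt0n i0 /=. Qed.

Lemma s1_gap : nth 0 s1 1 < nth 0 s1 0.
Proof.
have et : eps * theta <= 1 by case/andP: eps01; case/andP: theta01; nra.
have s0 : 0 <= nth 0 s1 0 := s1_ge0 ord0.
have := ler_wpM2r s0 et; rewrite mul1r; have := gap; have := s1_gt0; lra.
Qed.

Lemma s1_fst_gt0 : 0 < nth 0 s1 0.
Proof. by have := s1_gap; have := s1_gt0; lra. Qed.

Lemma s1_sqr_le_snd (i : 'I_d) : i != ord0 -> s1f i ^+ 2 <= nth 0 s1 1 ^+ 2.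
Proof. by move=> /s1_le_snd; rewrite ler_sqr // nnegrE ?s1_ge0 ?(ltW s1_gt0). Qed.

Lemma s1_sqr_lt_fst (i : 'I_d) : i != ord0 -> s1f i ^+ 2 < nth 0 s1 0 ^+ 2.
Proof. by move=> /s1_le_snd; have := s1_gap; have := s1_ge0 i; have := s1_gt0; nra. Qed.

Lemma dP_top_le (v v' : 'cV[K]_d) :
  dP v v' * (nth 0 s1 0 * theta) <= 2 * nth 0 s1 1 -> dP v v' <= eps / 8.
Proof.
have /andP[th0 _] := theta01.
by move=> le; rewrite -(ler_pM2r (mulr_gt0 s1_fst_gt0 th0)); have := gap; lra.
Qed.

Lemma g_gram : g *m kadj g = k1 *m rdiag_mx (fun i => s1f i ^+ 2) *m kadj k1.
Proof. by case: g_cartan => -[_ uk1'] _ _ _ gE; rewrite [in LHS]gE cartan_gram. Qed.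

Lemma cartan_top_line k s k' : cartan g k s k' ->
  exists2 al : K, al != 0 & k *m ecol ord0 = al *: (k1 *m ecol ord0).
Proof.
move=> [[uk uk'] _ s_ge0 s_sorted gE]; have [[uk1 _] _ _ _ _] := g_cartan.
have E : k1 *m rdiag_mx (fun i => s1f i ^+ 2) *m kadj k1
       = k *m rdiag_mx (fun i : 'I_d => nth 0 s i ^+ 2) *m kadj k.
  by rewrite -g_gram {1 2}gE cartan_gram.
have s_sqr_le (j : 'I_d) : nth 0 s j ^+ 2 <= nth 0 s 0 ^+ 2.
  by rewrite ler_sqr ?nnegrE ?s_ge0 ?s_sorted ?ltn_ord.
exact: (top_eigvec_unique (i2 := ord0) uk1 uk E s1_sqr_lt_fst s_sqr_le).
Qed.

Lemma kadj_g_gram : kadj g *m g = kadj k1' *m rdiag_mx (fun i => s1f i ^+ 2) *m k1'.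
Proof.
have [[uk1 _] _ _ _ gE] := g_cartan.
by rewrite -{2}(kadjK g) gE kadj_cartan cartan_gram ?kadjK // unitary_adj.
Qed.

(* The normal of [Xi_{d-1}(g^-1)] is the bottom singular direction of [g^-1],
   i.e. the top eigendirection of [g^* g = (g^-1 g^-1^* )^-1]. *)
Lemma cartan_inv_bottom_line k s k' : cartan (invmx g) k s k' ->
  exists2 al : K, al != 0 & k *m ecol ord_max = al *: (kadj k1' *m ecol ord0).
Proof.
move=> [[uk uk'] _ s_ge0 s_sorted gE].
have s_neq0 : forall j : 'I_d, nth 0 s j != 0.
  apply: (cartan_coef_neq0 (Q1 := k) (Q2 := k')).
  by rewrite -gE unitmx_inv (wordprod_unitmx HG red).
have s_gt0 (j : 'I_d) : 0 < nth 0 s j by rewrite lt_neqAle eq_sym s_neq0 s_ge0.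
have gE' : g = kadj k' *m rdiag_mx (fun j => (nth 0 s j)^-1) *m kadj k.
  by rewrite -[g]invmxK gE invmx_cartan.
have E : kadj k1' *m rdiag_mx (fun i => s1f i ^+ 2) *m kadj (kadj k1')
       = k *m rdiag_mx (fun j => (nth 0 s j)^-1 ^+ 2) *m kadj k.
  by rewrite kadjK -kadj_g_gram -{2}(kadjK g) gE' kadj_cartan !kadjK cartan_gram.
have s_inv_le (j : 'I_d) : (nth 0 s j)^-1 ^+ 2 <= (nth 0 s (ord_max : 'I_d))^-1 ^+ 2.
  rewrite ler_sqr ?nnegrE ?invr_ge0 ?(ltW (s_gt0 _)) // lef_pV2 ?posrE //.
  by apply: s_sorted; rewrite -ltnS !ltn_ord.
have uk1' : kadj k1' *m kadj (kadj k1') = 1%:M.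
  by have [[_ /unitary_adj]] := g_cartan; rewrite kadjK.
exact: (top_eigvec_unique (i1 := ord0) (i2 := ord_max) uk1' uk E s1_sqr_lt_fst s_inv_le).
Qed.

Lemma top_direction_near_U i : G i h -> (forall j, G j h -> j = i) ->
  forall k s k', cartan g k s k' ->
  forall z, z != 0 -> span_first k 1 z -> dist_pt_set z (U i) <= eps / 8.
Proof.
move=> Gi i_uniq k s k' /cartan_top_line[al al0 kE] z z0 [c c_supp zE].
have [[uk1 uk1'] _ _ _ gE] := g_cartan.
have zE' : z = (c ord0 0 * al) *: (k1 *m ecol ord0).
  have c_supp' j : j != ord0 -> c j 0 = 0.
    by move=> j0; apply: c_supp; rewrite lt0n; exact: j0.
  by rewrite -zE {1}(col_delta_supp c_supp') -scalemxAr kE scalerA.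
have ca0 : c ord0 0 * al != 0 by apply: contraNneq z0 => ca0; rewrite zE' ca0 scale0r.
have [[j Gj] _] := reduced_letter red (mem_last h t).
have [Ux [_ [Bx _]]] := Hxy (~~ j).
have [x' [x'0 x'near x'top]] := near_point_to_top (s := s1f) (i0 := ord0)
  (unitary_adj uk1) uk1' s1_fst_gt0 (ltW s1_gt0) s1_sqr_le_snd (HU Ux).1 theta01.
have [i' [Gi' Ui']] := pingpong_U HU PP red Gj (closP_sub (@HU _) (Bx x' x'0 x'near)).
rewrite (i_uniq _ Gi') in Ui'.
apply: le_trans (dist_pt_set_le _ Ui') _.
by rewrite zE' dPZl // dPC; apply: dP_top_le; rewrite gE; exact: x'top.
Qed.

Lemma bottom_hyperplane_near_V i : G i (last h t) -> (forall j, G j (last h t) -> j = i) ->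
  forall k s k', cartan (invmx g) k s k' ->
  forall w, w != 0 -> perp w = span_first k n.+1 -> dist_pt_set w (V i) <= eps / 8.
Proof.
move=> Gi i_uniq k s k' c w w0 wE; have [al al0 kE] := cartan_inv_bottom_line c.
have [[uk _] _ _ _ _] := c; have [[uk1 uk1'] _ _ _ gE] := g_cartan.
have wE' : w = ((kadj k *m w) ord_max 0 * al) *: (kadj k1' *m ecol ord0).
  by rewrite {1}(span_first_normal uk wE) kE scalerA.
have wa0 : (kadj k *m w) ord_max 0 * al != 0.
  by apply: contraNneq w0 => wa0; rewrite wE' wa0 scale0r.
have [[j Gj] _] := reduced_letter red (mem_head h t).
have [_ [Vy [_ By]]] := Hxy (~~ j).
have HO : kadj (kadj k1') *m kadj k1' = 1%:M by rewrite kadjK.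
have HI : kadj k1 *m kadj (kadj k1) = 1%:M by rewrite kadjK unitary_adj.
have [y' [y'0 y'near y'top]] := near_point_to_top (s := s1f) (i0 := ord0)
  HO HI s1_fst_gt0 (ltW s1_gt0) s1_sqr_le_snd (HV Vy).1 theta01.
have [i' [Gi' [w' Vw' w'E]]] :=
  pingpong_V HG HV PP red Gj (closP_sub (@HV _) (By y' y'0 y'near)).
rewrite (i_uniq _ Gi') in Vw'.
have gy0 : kadj g *m y' != 0.
  by rewrite (mulmx_linv_eq0 _ (mulVmx (kadj_unitmx (wordprod_unitmx HG red)))).
have [be be0 w'E'] := perp_eq_scale gy0 (HV Vw').1 (esym w'E).
apply: le_trans (dist_pt_set_le _ Vw') _.
rewrite wE' w'E' dPZl // dPZr //; apply: dP_top_le.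
by rewrite dPC gE kadj_cartan; exact: y'top.
Qed.

End TopDirections.

Unset Implicit Arguments.

Theorem lemma3p1 (R : realType) (b : bool) (d : nat) (hd : (2 <= d)%N)
  (G : bool -> set 'M[Kfld R b]_d) (U V : bool -> set 'cV[Kfld R b]_d)
  (eps theta : R) (x y : bool -> 'cV[Kfld R b]_d)
  (gs : seq 'M[Kfld R b]_d) (g : 'M[Kfld R b]_d) :
  (forall i, GLsemigroup (G i)) ->
  (forall i, projset (U i) /\ openP (U i)) ->
  (forall i, projset (V i) /\ openP (V i)) ->
  pingpong G U V ->
  0 < eps ->
  (forall i, eps <= distUV (closP (U i)) (closP (V (~~ i)))) ->
  0 < theta -> theta < eps ^+ 2 ->
  (forall i, U i (x i) /\ V i (y i) /\
     ball_sub (x i) theta (U i) /\ ball_sub (y i) theta (V i)) ->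
  let M := Num.max (16 / (eps * theta))
                   (8 * Num.sqrt ((d - 1)%:R) / eps ^+ 2) in
  (* g in Delta \ F, given as a reduced word g = g_1 ... g_n, n >= 1 *)
  (0 < size gs)%N -> reduced G gs -> g = wordprod gs ->
  (exists k s k', cartan g k s k' /\ M <= nth 0 s 0 / nth 0 s 1) ->
  (* (i) *)
  (forall i, G i (head 1%:M gs) -> (forall j, G j (head 1%:M gs) -> j = i) ->
     forall k s k', cartan g k s k' -> nth 0 s 1 < nth 0 s 0 ->
     forall z, z != 0 -> span_first k 1 z ->
       dist_pt_set z (U i) <= eps / 8) /\
  (* (ii) *)
  (forall i, G i (last 1%:M gs) -> (forall j, G j (last 1%:M gs) -> j = i) ->
     forall k s k', cartan (invmx g) k s k' ->
       nth 0 s (d.-1) < nth 0 s (d.-2) ->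
     forall w, w != 0 -> perp w = span_first k d.-1 ->
       dist_pt_set w (V i) <= eps / 8).
Proof.
(* Only [eps <= 1] (distances in P(K^d) are at most 1), [theta < 1] and
   [M >= 16 / (eps theta)] are used of the hypotheses on [eps], [theta], [M]. *)
case: d hd G U V x y gs g => [|[|n]] // _ G U V x y gs g.
move=> HG HU HV PP eps_gt0 eps_dist theta_gt0 theta_lt Hxy M.
case: gs => [//|h t] _ red -> [k1 [s1 [k1' [g_cartan M_le]]]].
have eps_le1 : eps <= 1 := le_trans (eps_dist true) (distUV_le1 _ _).
have theta01 : 0 < theta < 1 by rewrite theta_gt0 /=; nra.
have M16 : 16 / (eps * theta) <= M by rewrite /M le_max lexx.
have [s1_gt0 gap] := ratio_lower_bound (ltr0n _ 16) (mulr_gt0 eps_gt0 theta_gt0)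
  (le_trans M16 M_le) (s1_ge0 g_cartan (lift ord0 ord0)).
have eps01 : 0 < eps <= 1 by rewrite eps_gt0.
have HU' i := (HU i).1; have HV' i := (HV i).1.
split.
- move=> i Gi i_uniq k s k' c _.
  exact: (top_direction_near_U HU' PP eps01 theta01 Hxy red g_cartan s1_gt0 gap Gi i_uniq c).
- move=> i Gi i_uniq k s k' c _.
  exact: (bottom_hyperplane_near_V HG HV' PP eps01 theta01 Hxy red g_cartan s1_gt0 gap Gi i_uniq c).
Qed.
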